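(* Let $(N(t))_{t\ge 0}$ be the continuous-time Markov chain on $\{1,2,3,\dots\}$ in which state $1$ is absorbing, from state $2$ the chain jumps to $1$ at rate $2$ and to $3$ at rate $2$, and from each state $n\ge 3$ it jumps to $n+1$ at rate $n$ and to $n-1$ at rate $n$. Start at $N(0)=2$, let $H_1$ be the hitting time of state $1$, and let $F(t)=\mathrm{P}(H_1\le t)$ (which is the solution of the renewal equation $F(t) = \frac{2t}{(1+t)^{3}} + \int_{0}^{t}\frac{2}{(1+(t-y))^{3}}F(y)\, \mathrm{d} y$), with density $F'$. Then, as $h\to\infty$, \[ \int_0^{h}tF'(t)\,\mathrm{d} t \sim \log(h) \qquad\text{and}\qquad \int_0^{h}t^2F'(t)\,\mathrm{d} t \sim h . \]
   Context: Here $a(h)\sim b(h)$ means $a(h)/b(h)\to 1$ as $h\to\infty$. The chain describes the number of coexisting viral types in a birth–death model with equal birth and death rates (each equal to the current number of types), where a single type cannot die; $H_1$ is the return time from two types to one type. *)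

From Stdlib Require Import Reals.
From Coquelicot Require Import Coquelicot.
Open Scope R_scope.

Definition renewal_g (t : R) : R := 2 * t / (1 + t) ^ 3.

Definition renewal_k (s : R) : R := 2 / (1 + s) ^ 3.

Definition solves_renewal (F : R -> R) : Prop :=
  (forall t, 0 <= t -> filterlim F (at_right t) (locally (F t))) /\
  (forall t, 0 < t -> continuous F t) /\
  (forall t, 0 <= t ->
     F t = renewal_g t + RInt (fun y => renewal_k (t - y) * F y) 0 t).

From Stdlib Require Import Reals Lra.
From Coquelicot Require Import Coquelicot.
Open Scope R_scope.

(* The distribution function F has a continuous density f = F'.  Differentiating the
   renewal equation and integrating by parts gives f = g' + k * f and, with
   K(s) = 1/(1+s)^2 (so that -K' = k), the exact identities K * f = g, K * F = t^2/(1+t)^2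
   and K * (1 - F) = t/(1+t)^2, where * is convolution on [0, t].  Inserting
   k(s) >= 2 K(s) / (1+t) (for s <= t) into f = g' + k * f and using K * f = g gives
   f >= 2/(1+t)^4 > 0 as long as f >= 0, hence f > 0 throughout; so the tail T = 1 - F is
   nonincreasing, and the last identity then squeezes t T(t) -> 1.  Finally, by parts,
   int_0^h t F' = int_0^h T - h T(h) and int_0^h t^2 F' = 2 int_0^h t T - h^2 T(h),
   and T ~ 1/t yields the asymptotics log h and h. *)

(* [RInt] returns an element of a Coquelicot module whose carrier is only convertible to [R];
   equations involving it must be retyped at [R] before [ring], [field] or [lra] apply. *)
Ltac R_eq := lazymatch goal with |- @eq _ ?a ?b => change (@eq R a b) end.

Ltac solve_nonzero :=
  repeat split; try (apply pow_nonzero; lra);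
  try (repeat apply Rmult_integral_contrapositive_currified; lra); try lra.

Lemma continuous_of_is_derive (f : R -> R) (x l : R) :
  is_derive f x l -> continuous f x.
Proof.
  intros Hf. apply (ex_derive_continuous (K := R_AbsRing) (V := R_NormedModule)).
  now exists l.
Qed.

Lemma ex_RInt_of_continuous (f : R -> R) (a b : R) :
  (forall z, Rmin a b <= z <= Rmax a b -> continuous f z) -> ex_RInt f a b.
Proof. apply (ex_RInt_continuous (V := R_CompleteNormedModule)). Qed.

Lemma RInt_plus_R (f g : R -> R) (a b : R) : ex_RInt f a b -> ex_RInt g a b ->
  RInt (fun x => f x + g x) a b = RInt f a b + RInt g a b.
Proof. apply (RInt_plus (V := R_CompleteNormedModule)). Qed.

Lemma RInt_minus_R (f g : R -> R) (a b : R) : ex_RInt f a b -> ex_RInt g a b ->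
  RInt (fun x => f x - g x) a b = RInt f a b - RInt g a b.
Proof. apply (RInt_minus (V := R_CompleteNormedModule)). Qed.

Lemma RInt_scal_R (f : R -> R) (a b l : R) : ex_RInt f a b ->
  RInt (fun x => l * f x) a b = l * RInt f a b.
Proof. apply (RInt_scal (V := R_CompleteNormedModule)). Qed.

Lemma RInt_Chasles_R (f : R -> R) (a b c : R) : ex_RInt f a b -> ex_RInt f b c ->
  RInt f a b + RInt f b c = RInt f a c.
Proof. apply (RInt_Chasles (V := R_CompleteNormedModule)). Qed.

Lemma RInt_point_R (f : R -> R) (a : R) : RInt f a a = 0.
Proof. apply (RInt_point (V := R_CompleteNormedModule)). Qed.

Lemma RInt_const_R (a b c : R) : RInt (fun _ => c) a b = (b - a) * c.
Proof. apply (RInt_const (V := R_CompleteNormedModule)). Qed.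

Lemma RInt_derive_R (f df : R -> R) (a b : R) :
  (forall x, Rmin a b <= x <= Rmax a b -> is_derive f x (df x)) ->
  (forall x, Rmin a b <= x <= Rmax a b -> continuous df x) ->
  RInt df a b = f b - f a.
Proof.
  intros Hd Hc. apply is_RInt_unique.
  apply (is_RInt_derive (V := R_CompleteNormedModule)); assumption.
Qed.

Lemma is_derive_mult_R (f g : R -> R) (x df dg : R) :
  is_derive f x df -> is_derive g x dg ->
  is_derive (fun y => f y * g y) x (df * g x + f x * dg).
Proof.
  intros Hf Hg. apply (is_derive_mult f g x df dg Hf Hg). apply Rmult_comm.
Qed.

Lemma is_derive_minus_R (f g : R -> R) (x df dg : R) :
  is_derive f x df -> is_derive g x dg -> is_derive (fun y => f y - g y) x (df - dg).
Proof. apply (is_derive_minus (K := R_AbsRing) (V := R_NormedModule)). Qed.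

Lemma continuous_plus_R (f g : R -> R) (x : R) :
  continuous f x -> continuous g x -> continuous (fun y => f y + g y) x.
Proof. apply (continuous_plus (V := R_NormedModule)). Qed.

Lemma continuous_mult_R (f g : R -> R) (x : R) :
  continuous f x -> continuous g x -> continuous (fun y => f y * g y) x.
Proof. intros Hf Hg. now apply (continuous_mult f g). Qed.

Lemma continuous_minus_R (f g : R -> R) (x : R) :
  continuous f x -> continuous g x -> continuous (fun y => f y - g y) x.
Proof. apply (continuous_minus (V := R_NormedModule)). Qed.

Lemma is_derive_pow_id (n : nat) (x : R) :
  is_derive (fun t => t ^ n) x (INR n * x ^ pred n).
Proof.
  rewrite <- (Rmult_1_r (INR n)) at 1.
  apply (is_derive_pow (fun t => t)), (is_derive_id (K := R_AbsRing)).
Qed.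

Lemma continuous_eps_delta (f : R -> R) (x : R) : continuous f x ->
  forall eps, 0 < eps ->
  exists d, 0 < d /\ forall y, Rabs (y - x) < d -> Rabs (f y - f x) < eps.
Proof.
  intros Hc eps Heps.
  destruct (Hc _ (locally_ball (f x) (mkposreal eps Heps))) as [d Hd].
  exists d. split; [apply cond_pos | intros y Hy; apply (Hd y Hy)].
Qed.

Lemma locally_Rabs (x r : R) (P : R -> Prop) : 0 < r ->
  (forall y, Rabs (y - x) < r -> P y) -> locally x P.
Proof. intros Hr HP. exists (mkposreal r Hr). exact HP. Qed.

Lemma eq_of_is_derive (f g h : R -> R) (a b : R) : a <= b ->
  (forall x, a < x < b -> is_derive f x (h x) /\ is_derive g x (h x)) ->
  (forall x, a <= x <= b -> continuous f x /\ continuous g x) ->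
  f a = g a -> f b = g b.
Proof.
  intros Hab Hd Hc Ha.
  destruct (MVT_gen (fun x => f x - g x) a b (fun _ => 0)) as [c [_ Hmvt]].
  - intros x Hx. rewrite Rmin_left, Rmax_right in Hx by lra.
    replace 0 with (h x - h x) by ring.
    destruct (Hd x Hx). now apply is_derive_minus_R.
  - intros x Hx. rewrite Rmin_left, Rmax_right in Hx by lra.
    apply continuity_pt_filterlim. destruct (Hc x Hx).
    now apply continuous_minus_R.
  - lra.
Qed.

Lemma le_of_is_derive_nonneg (f df : R -> R) (a b : R) : a <= b ->
  (forall x, a < x < b -> is_derive f x (df x)) ->
  (forall x, a <= x <= b -> continuous f x /\ 0 <= df x) ->
  f a <= f b.
Proof.
  intros Hab Hd Hc.
  destruct (MVT_gen f a b df) as [c [Hc' Hmvt]].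
  - intros x Hx. rewrite Rmin_left, Rmax_right in Hx by lra. now apply Hd.
  - intros x Hx. rewrite Rmin_left, Rmax_right in Hx by lra.
    apply continuity_pt_filterlim. now apply Hc.
  - rewrite Rmin_left, Rmax_right in Hc' by lra.
    destruct (Hc c Hc') as [_ Hpos]. nra.
Qed.

Lemma RInt_by_parts (u du v dv : R -> R) (a b : R) :
  (forall x, Rmin a b <= x <= Rmax a b ->
     is_derive u x (du x) /\ is_derive v x (dv x)) ->
  (forall x, Rmin a b <= x <= Rmax a b -> continuous du x /\ continuous dv x) ->
  RInt (fun x => u x * dv x) a b = u b * v b - u a * v a - RInt (fun x => du x * v x) a b.
Proof.
  intros Hd Hc.
  assert (Hcont : forall x, Rmin a b <= x <= Rmax a b ->
    continuous (fun x => du x * v x) x /\ continuous (fun x => u x * dv x) x).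
  { intros x Hx. destruct (Hd x Hx) as [Hu Hv], (Hc x Hx) as [Hdu Hdv].
    split; apply continuous_mult_R; try assumption; eapply continuous_of_is_derive; eassumption. }
  assert (Hprod : RInt (fun x => du x * v x + u x * dv x) a b = u b * v b - u a * v a).
  { apply (RInt_derive_R (fun x => u x * v x)).
    - intros x Hx. destruct (Hd x Hx). now apply is_derive_mult_R.
    - intros x Hx. destruct (Hcont x Hx). now apply continuous_plus_R. }
  rewrite RInt_plus_R in Hprod
    by (apply ex_RInt_of_continuous; intros x Hx; apply (Hcont x Hx)).
  lra.
Qed.

Lemma RInt_inv_shift (c a b : R) : 0 < c + a -> a <= b ->
  RInt (fun y => / (c + y)) a b = ln (c + b) - ln (c + a).
Proof.
  intros Hca Hab. apply (RInt_derive_R (fun y => ln (c + y))); intros x Hx;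
    rewrite Rmin_left, Rmax_right in Hx by lra.
  - auto_derive; [lra | field; lra].
  - apply (continuous_of_is_derive _ _ (- / (c + x) ^ 2)). auto_derive; [lra | field; lra].
Qed.

Lemma RInt_inv (a b : R) : 0 < a <= b -> RInt (fun s => / s) a b = ln b - ln a.
Proof.
  intros Hab. rewrite <- (Rplus_0_l a), <- (Rplus_0_l b) at 2.
  rewrite <- RInt_inv_shift by lra. apply RInt_ext. intros x _. now rewrite Rplus_0_l.
Qed.

Lemma is_lim_const_div_ln (c : R) : is_lim (fun h => c / ln h) p_infty 0.
Proof.
  replace (Finite 0) with (Rbar_div c p_infty) by (simpl; f_equal; ring).
  apply (is_lim_div (fun _ => c) ln p_infty c p_infty);
    [apply is_lim_const | apply is_lim_ln_p | discriminate | exact I].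
Qed.

Lemma nonneg_of_left_limit (phi : R -> R) (a b : R) : continuous phi b -> a < b ->
  (forall y, a <= y < b -> 0 < phi y) -> 0 <= phi b.
Proof.
  intros Hc Hab Hpos.
  destruct (Rle_or_lt 0 (phi b)) as [ok | Hlt]; [assumption | exfalso].
  destruct (continuous_eps_delta phi b Hc (- phi b) ltac:(lra)) as [d [Hd Hnear]].
  set (y := Rmax a (b - d / 2)).
  assert (Hy : a <= y < b /\ Rabs (y - b) < d).
  { unfold y, Rmax. destruct Rle_dec; (split; [lra | apply Rabs_def1; lra]). }
  specialize (Hnear y (proj2 Hy)). apply Rabs_def2 in Hnear.
  specialize (Hpos y (proj1 Hy)). lra.
Qed.

(* The supremum [tau] of the times up to which [phi] stays positive cannot be finite:
   [phi tau >= 0] by continuity, so [phi tau > 0], and positivity persists a bit beyond. *)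
Lemma pos_by_continuity (phi : R -> R) :
  (forall t, 0 <= t -> continuous phi t) -> 0 < phi 0 ->
  (forall t, 0 <= t -> (forall y, 0 <= y <= t -> 0 <= phi y) -> 0 < phi t) ->
  forall t, 0 <= t -> 0 < phi t.
Proof.
  intros Hc H0 Hstep t1 Ht1.
  destruct (Rlt_or_le 0 (phi t1)) as [ok | Hneg]; [assumption | exfalso].
  set (E := fun s => 0 <= s /\ forall y, 0 <= y <= s -> 0 < phi y).
  assert (HE0 : E 0).
  { split; [lra | intros y Hy; replace y with 0 by lra; exact H0]. }
  assert (Hbound : bound E).
  { exists t1. intros s [Hs HEs]. destruct (Rle_or_lt s t1); [assumption|].
    specialize (HEs t1 ltac:(lra)). lra. }
  destruct (completeness E Hbound (ex_intro _ 0 HE0)) as [tau [Hub Hlub]].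
  assert (Htau : 0 <= tau) by (apply Hub, HE0).
  assert (Hbelow : forall y, 0 <= y < tau -> 0 < phi y).
  { intros y Hy. destruct (Rlt_or_le 0 (phi y)) as [ok | Hy']; [assumption | exfalso].
    enough (tau <= y) by lra.
    apply Hlub. intros s [Hs HEs]. destruct (Rle_or_lt s y); [assumption|].
    specialize (HEs y ltac:(lra)). lra. }
  assert (Hat : 0 <= phi tau).
  { destruct (Req_dec tau 0) as [-> | Hnz]; [lra|].
    apply (nonneg_of_left_limit phi 0 tau); [now apply Hc | lra | exact Hbelow]. }
  assert (Hpos : 0 < phi tau).
  { apply Hstep; [assumption|]. intros y Hy.
    destruct (Req_dec y tau) as [-> | Hne]; [assumption|].
    left. apply Hbelow. lra. }
  destruct (continuous_eps_delta phi tau (Hc tau Htau) (phi tau / 2) ltac:(lra))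
    as [d [Hd Hnear]].
  assert (HE : E (tau + d / 2)).
  { split; [lra|]. intros y Hy. destruct (Rlt_or_le y tau); [apply Hbelow; lra|].
    assert (Hyd : Rabs (y - tau) < d) by (apply Rabs_def1; lra).
    specialize (Hnear y Hyd). apply Rabs_def2 in Hnear. lra. }
  specialize (Hub _ HE). lra.
Qed.

Lemma ex_RInt_on_halfline (g : R -> R) (a b c : R) :
  (forall x, a <= x -> continuous g x) -> a <= b -> b <= c -> ex_RInt g b c.
Proof.
  intros Hg Hab Hbc. apply ex_RInt_of_continuous. intros z Hz.
  rewrite Rmin_left in Hz by lra. apply Hg. lra.
Qed.

Lemma RInt_relative_error (f w : R -> R) (a b eps : R) : a <= b ->
  (forall x, a <= x <= b -> continuous f x /\ continuous w x) ->
  (forall x, a <= x <= b -> Rabs (f x - w x) <= eps * w x) ->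
  Rabs (RInt f a b - RInt w a b) <= eps * RInt w a b.
Proof.
  intros Hab Hc Hclose.
  assert (Hex : forall g : R -> R, (forall x, a <= x <= b -> continuous g x) -> ex_RInt g a b).
  { intros g Hg. apply ex_RInt_of_continuous. intros z Hz.
    rewrite Rmin_left, Rmax_right in Hz by lra. now apply Hg. }
  assert (Hfw : forall x, a <= x <= b -> continuous (fun x => f x - w x) x)
    by (intros x Hx; destruct (Hc x Hx); now apply continuous_minus_R).
  rewrite <- RInt_minus_R by (apply Hex; apply Hc).
  eapply Rle_trans; [apply abs_RInt_le; [exact Hab | apply Hex, Hfw]|].
  rewrite <- RInt_scal_R by (apply Hex; apply Hc).
  apply RInt_le; [exact Hab | | | intros x Hx; apply Hclose; lra].
  - apply Hex. intros x Hx.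
    apply (continuous_comp (fun x => f x - w x) Rabs); [now apply Hfw | apply continuous_Rabs].
  - apply Hex. intros x Hx. apply continuous_mult_R; [apply continuous_const | apply Hc, Hx].
Qed.

Lemma Rabs_sub_le_of_ratio (x y d : R) : 0 < y -> Rabs (x / y - 1) < d -> Rabs (x - y) <= d * y.
Proof.
  intros Hy Hxy. replace (x - y) with (y * (x / y - 1)) by (field; lra).
  rewrite Rabs_mult, (Rabs_pos_eq y), Rmult_comm by lra.
  apply Rmult_le_compat_r; lra.
Qed.

Lemma Rabs_ratio_sub_1_lt (x y d : R) : 0 < y -> Rabs (x - y) < d * y -> Rabs (x / y - 1) < d.
Proof.
  intros Hy Hxy. replace (x / y - 1) with ((x - y) / y) by (field; lra).
  rewrite Rabs_div, (Rabs_pos_eq y) by lra. now apply Rlt_div_l.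
Qed.

(* Beyond some [M] the relative error of [f] against [w] is below [eps / 2]; the fixed
   discrepancy on [a, M] becomes negligible once [RInt w a h] is large. *)
Lemma is_lim_RInt_ratio (f w : R -> R) (a : R) :
  (forall x, a <= x -> continuous f x /\ continuous w x /\ 0 < w x) ->
  is_lim (fun h => RInt w a h) p_infty p_infty ->
  is_lim (fun s => f s / w s) p_infty 1 ->
  is_lim (fun h => RInt f a h / RInt w a h) p_infty 1.
Proof.
  intros Hfw Hw Hratio. apply is_lim_spec. intros eps.
  assert (Hcf : forall x, a <= x -> continuous f x) by (apply Hfw).
  assert (Hcw : forall x, a <= x -> continuous w x) by (apply Hfw).
  apply is_lim_spec in Hratio.
  destruct (Hratio (pos_div_2 eps)) as [M0 HM0]. simpl in HM0.
  set (M := Rmax a (M0 + 1)).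
  assert (HaM : a <= M) by apply Rmax_l.
  assert (HM0M : M0 + 1 <= M) by apply Rmax_r.
  assert (Hclose : forall s, M <= s -> Rabs (f s - w s) <= eps / 2 * w s).
  { intros s Hs. apply Rabs_sub_le_of_ratio; [apply Hfw; lra | apply HM0; lra]. }
  set (C := Rabs (RInt f a M - RInt w a M)).
  apply is_lim_spec in Hw. destruct (Hw (2 * C / eps)) as [N HN]. simpl in HN.
  exists (Rmax M N). intros h Hh.
  assert (HMh : M < h) by (eapply Rle_lt_trans; [apply Rmax_l | exact Hh]).
  assert (HW : 2 * C / eps < RInt w a h)
    by (apply HN; eapply Rle_lt_trans; [apply Rmax_r | exact Hh]).
  set (W := RInt w a h : R) in *.
  assert (HC : 0 <= C) by apply Rabs_pos.
  pose proof (cond_pos eps) as Heps.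
  apply Rlt_div_l in HW; [|exact Heps].
  assert (HWpos : 0 < W) by nra.
  assert (HtailW : RInt w M h <= W).
  { unfold W. rewrite <- (RInt_Chasles_R w a M h)
      by (apply (ex_RInt_on_halfline w a); auto; lra).
    assert (0 <= RInt w a M); [|lra].
    apply RInt_ge_0; [assumption | apply (ex_RInt_on_halfline w a); auto; lra|].
    intros x Hx. left. apply Hfw. lra. }
  assert (Htail : Rabs (RInt f M h - RInt w M h) <= eps / 2 * W).
  { eapply Rle_trans; [apply RInt_relative_error; [lra | | intros x Hx; apply Hclose; lra]|].
    - intros x Hx. split; [apply Hcf | apply Hcw]; lra.
    - apply Rmult_le_compat_l; [apply Rlt_le, (pos_div_2 eps) | assumption]. }
  assert (Hsplit : RInt f a h - W = (RInt f a M - RInt w a M) + (RInt f M h - RInt w M h)).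
  { unfold W. rewrite <- (RInt_Chasles_R f a M h), <- (RInt_Chasles_R w a M h)
      by (apply (ex_RInt_on_halfline _ a); auto; lra).
    ring. }
  apply Rabs_ratio_sub_1_lt; [exact HWpos|]. rewrite Hsplit.
  eapply Rle_lt_trans; [apply Rabs_triang|]. fold C. lra.
Qed.

Definition conv (k G : R -> R) (t : R) : R := RInt (fun y => k (t - y) * G y) 0 t.

(* Kernels are asked to be C^1 slightly to the left of 0, so that the Leibniz rule
   for [conv] also holds at (and just below) t = 0. *)
Definition smooth_kernel (k k' : R -> R) : Prop :=
  forall s, -1/2 < s -> is_derive k s (k' s) /\ continuous k' s.

Section Convolution.

Variables k k' G : R -> R.
Hypothesis Hk : smooth_kernel k k'.
Hypothesis HG : forall y, continuous G y.

Lemma continuous_kernel (s : R) : -1/2 < s -> continuous k s.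
Proof. intros Hs. eapply continuous_of_is_derive, Hk, Hs. Qed.

Lemma continuous_conv_integrand (t y : R) :
  -1/2 < t - y -> continuous (fun y => k (t - y) * G y) y.
Proof.
  intros Hty. apply continuous_mult_R; [|apply HG].
  apply (continuous_comp (fun y => t - y) k).
  - apply (continuous_of_is_derive _ _ (-1)). auto_derive; [exact I | ring].
  - now apply continuous_kernel.
Qed.

Lemma ex_RInt_conv_integrand (t a b : R) :
  (forall z, Rmin a b <= z <= Rmax a b -> -1/2 < t - z) ->
  ex_RInt (fun y => k (t - y) * G y) a b.
Proof.
  intros Hab. apply ex_RInt_of_continuous. intros z Hz.
  now apply continuous_conv_integrand, Hab.
Qed.

Lemma is_derive_shifted_kernel (u v : R) :
  -1/2 < u - v -> is_derive (fun z => k (z - v) * G v) u (k' (u - v) * G v).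
Proof.
  intros Huv. rewrite <- (Rplus_0_r (k' (u - v) * G v)).
  replace 0 with (k (u - v) * 0) by ring.
  apply (is_derive_mult_R (fun z => k (z - v)) (fun _ => G v)); [|apply (is_derive_const (G v) u)].
  replace (k' (u - v)) with (scal 1 (k' (u - v))) by (unfold scal; simpl; unfold mult; simpl; ring).
  apply (is_derive_comp k (fun z => z - v)); [now apply Hk|].
  auto_derive; [exact I | ring].
Qed.

Lemma continuity_2d_derive_shifted_kernel (u0 v0 : R) :
  -1/2 < u0 - v0 ->
  continuity_2d_pt (fun u v => Derive (fun z => k (z - v) * G v) u) u0 v0.
Proof.
  intros Huv.
  apply continuity_2d_pt_ext_loc with (f := fun u v => k' (u - v) * G v).
  - assert (Hr : 0 < (u0 - v0 + 1/2) / 2) by lra.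
    exists (mkposreal _ Hr). simpl. intros u v Hu Hv.
    apply Rabs_def2 in Hu. apply Rabs_def2 in Hv.
    symmetry. apply is_derive_unique, is_derive_shifted_kernel. lra.
  - apply continuity_2d_pt_mult.
    + apply (continuity_1d_2d_pt_comp k' (fun u v => u - v)).
      * apply continuity_pt_filterlim, Hk. lra.
      * apply continuity_2d_pt_minus;
          [apply continuity_2d_pt_id1 | apply continuity_2d_pt_id2].
    + apply (continuity_1d_2d_pt_comp G (fun u v => v)).
      * apply continuity_pt_filterlim, HG.
      * apply continuity_2d_pt_id2.
Qed.

Lemma is_derive_conv (x : R) : -1/8 < x ->
  is_derive (conv k G) x (conv k' G x + k 0 * G x).
Proof.
  intros Hx. unfold conv.
  assert (H8 : 0 < 1/8) by lra.
  replace (k 0 * G x) with (k (x - x) * G x * 1) by (rewrite Rminus_diag; ring).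
  replace (RInt (fun y => k' (x - y) * G y) 0 x)
    with (RInt (fun t => Derive (fun u => k (u - t) * G t) x) 0 x).
  2:{ apply RInt_ext. intros t Ht. apply is_derive_unique, is_derive_shifted_kernel.
      revert Ht. unfold Rmin, Rmax. destruct Rle_dec; lra. }
  apply (is_derive_RInt_param_bound_comp_aux3 (fun x t => k (x - t) * G t) 0 (fun x => x)).
  - apply (locally_Rabs x (1/8)); [lra|]. intros y Hy. apply Rabs_def2 in Hy.
    apply ex_RInt_conv_integrand. intros z. unfold Rmin, Rmax. destruct Rle_dec; lra.
  - exists (mkposreal _ H8). apply (locally_Rabs x (1/8)); [lra|].
    intros y Hy. apply Rabs_def2 in Hy. simpl.
    apply ex_RInt_conv_integrand. intros z. unfold Rmin, Rmax. destruct Rle_dec; lra.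
  - auto_derive; [exact I | ring].
  - exists (mkposreal _ H8). apply (locally_Rabs x (1/8)); [lra|].
    intros y Hy t Ht. apply Rabs_def2 in Hy. simpl in Ht.
    eexists. apply is_derive_shifted_kernel.
    revert Ht. unfold Rmin, Rmax. do 2 destruct Rle_dec; lra.
  - intros t Ht. apply continuity_2d_derive_shifted_kernel.
    revert Ht. unfold Rmin, Rmax. destruct Rle_dec; lra.
  - exists (mkposreal _ H8). simpl. intros u v Hu Hv.
    apply Rabs_def2 in Hu. apply Rabs_def2 in Hv.
    apply continuity_2d_derive_shifted_kernel. lra.
  - apply continuity_pt_filterlim, continuous_conv_integrand. lra.
Qed.

Lemma conv_opp_kernel (t : R) : 0 <= t -> conv (fun s => - k s) G t = - conv k G t.
Proof.
  intros Ht. unfold conv.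
  replace (- RInt (fun y => k (t - y) * G y) 0 t)
    with (-1 * RInt (fun y => k (t - y) * G y) 0 t) by ring.
  rewrite <- RInt_scal_R.
  - apply RInt_ext. intros y _. change (- k (t - y) * G y = -1 * (k (t - y) * G y)). ring.
  - apply ex_RInt_conv_integrand. intros z. rewrite Rmin_left, Rmax_right by lra. lra.
Qed.

End Convolution.

Lemma conv_ext (k G H : R -> R) (t : R) : 0 <= t ->
  (forall y, 0 <= y <= t -> G y = H y) -> conv k G t = conv k H t.
Proof.
  intros Ht HGH. apply RInt_ext. intros y Hy.
  rewrite Rmin_left, Rmax_right in Hy by lra. rewrite HGH by lra. reflexivity.
Qed.

Lemma conv_by_parts (k k' G g : R -> R) (t : R) : smooth_kernel k k' -> 0 <= t ->
  (forall y, 0 <= y <= t -> is_derive G y (g y) /\ continuous g y) -> G 0 = 0 ->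
  conv k g t = k 0 * G t + conv k' G t.
Proof.
  intros Hk Ht HG HG0. unfold conv.
  assert (Hkt : forall y, 0 <= y <= t ->
    is_derive (fun y => k (t - y)) y (- k' (t - y)) /\ continuous (fun y => - k' (t - y)) y).
  { intros y Hy. split.
    - replace (- k' (t - y)) with (scal (-1) (k' (t - y)))
        by (unfold scal; simpl; unfold mult; simpl; ring).
      apply (is_derive_comp k (fun z => t - z)); [apply Hk; lra|].
      auto_derive; [exact I | ring].
    - apply (continuous_comp (fun y => t - y) (fun s => - k' s)).
      + apply (continuous_of_is_derive _ _ (-1)). auto_derive; [exact I | ring].
      + apply (continuous_opp (V := R_NormedModule) k'), Hk. lra. }
  rewrite (RInt_by_parts (fun y => k (t - y)) (fun y => - k' (t - y)) G g);
    rewrite ?Rmin_left, ?Rmax_right by lra.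
  - rewrite HG0, Rminus_diag, Rminus_0_r.
    replace (RInt (fun x => - k' (t - x) * G x) 0 t)
      with (RInt (fun x => -1 * (k' (t - x) * G x)) 0 t)
      by (apply RInt_ext; intros x _; change (-1 * (k' (t - x) * G x) = - k' (t - x) * G x);
          ring).
    rewrite RInt_scal_R; [ring|].
    apply ex_RInt_of_continuous. intros z Hz. rewrite Rmin_left, Rmax_right in Hz by lra.
    apply continuous_mult_R.
    + apply (continuous_comp (fun y => t - y) k').
      * apply (continuous_of_is_derive _ _ (-1)). auto_derive; [exact I | ring].
      * apply Hk. lra.
    + eapply continuous_of_is_derive, HG. lra.
  - intros x Hx. split; [apply Hkt | apply HG]; lra.
  - intros x Hx. split; [apply Hkt | apply HG]; lra.
Qed.

Definition renewal_k' (s : R) : R := -6 / (1 + s) ^ 4.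
Definition renewal_k'' (s : R) : R := 24 / (1 + s) ^ 5.
Definition renewal_g' (s : R) : R := 2 * (1 - 2 * s) / (1 + s) ^ 4.
(* [renewal_K s] is the integral of [renewal_k] over [s, oo). *)
Definition renewal_K (s : R) : R := 1 / (1 + s) ^ 2.

Lemma smooth_renewal_k : smooth_kernel renewal_k renewal_k'.
Proof.
  intros s Hs. unfold renewal_k, renewal_k'. split.
  - auto_derive; [solve_nonzero | field; lra].
  - apply (continuous_of_is_derive _ _ (renewal_k'' s)).
    unfold renewal_k''. auto_derive; [solve_nonzero | field; lra].
Qed.

Lemma smooth_renewal_k' : smooth_kernel renewal_k' renewal_k''.
Proof.
  intros s Hs. unfold renewal_k', renewal_k''. split.
  - auto_derive; [solve_nonzero | field; lra].
  - apply (continuous_of_is_derive _ _ (-120 / (1 + s) ^ 6)).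
    auto_derive; [solve_nonzero | field; lra].
Qed.

Lemma smooth_renewal_K : smooth_kernel renewal_K (fun s => - renewal_k s).
Proof.
  intros s Hs. unfold renewal_K. split.
  - unfold renewal_k. auto_derive; [solve_nonzero | field; lra].
  - apply (continuous_opp (V := R_NormedModule)), (continuous_kernel _ renewal_k').
    + exact smooth_renewal_k.
    + exact Hs.
Qed.

Lemma is_derive_renewal_g (s : R) : -1/2 < s ->
  is_derive renewal_g s (renewal_g' s) /\ continuous renewal_g' s.
Proof.
  intros Hs. unfold renewal_g, renewal_g'. split.
  - auto_derive; [solve_nonzero | field; lra].
  - apply (continuous_of_is_derive _ _ (12 * (s - 1) / (1 + s) ^ 5)).
    auto_derive; [solve_nonzero | field; lra].
Qed.

Lemma renewal_K_pos (s : R) : -1 < s -> 0 < renewal_K s.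
Proof. intros Hs. unfold renewal_K. apply Rdiv_lt_0_compat, pow_lt; lra. Qed.

Lemma renewal_K_le (a b : R) : 0 <= a <= b -> renewal_K b <= renewal_K a.
Proof.
  intros Hab. unfold renewal_K, Rdiv. rewrite !Rmult_1_l.
  apply Rinv_le_contravar; [apply pow_lt; lra | apply pow_incr; lra].
Qed.

Lemma renewal_k_ge_K (s t : R) : 0 <= s <= t -> 2 / (1 + t) * renewal_K s <= renewal_k s.
Proof.
  intros Hst. unfold renewal_k, renewal_K.
  replace (2 / (1 + s) ^ 3) with (2 / (1 + s) * (1 / (1 + s) ^ 2)) by (field; lra).
  apply Rmult_le_compat_r; [apply Rlt_le, Rdiv_lt_0_compat, pow_lt; lra|].
  unfold Rdiv. apply Rmult_le_compat_l; [lra|].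
  apply Rinv_le_contravar; lra.
Qed.

Lemma RInt_renewal_K (t a b : R) : a <= b <= t ->
  RInt (fun y => renewal_K (t - y)) a b = 1 / (1 + t - b) - 1 / (1 + t - a).
Proof.
  intros Hab. apply (RInt_derive_R (fun y => 1 / (1 + t - y))); intros x Hx;
    rewrite Rmin_left, Rmax_right in Hx by lra.
  - unfold renewal_K. auto_derive; [lra | field; lra].
  - apply (continuous_of_is_derive _ _ (2 / (1 + (t - x)) ^ 3)).
    unfold renewal_K. auto_derive; [solve_nonzero | field; lra].
Qed.

Lemma tail_asymptotic_arith (e t L c X : R) : 0 < e <= 1/4 -> 2 / e <= t ->
  0 <= L <= e ^ 3 * t -> 0 <= c <= 1 ->
  t / (1 + t) ^ 2 <= renewal_K (e * t) * L + X * c -> 1 - 3 * e <= (1 - e) * t * X.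
Proof.
  intros He Ht HL Hc Hbound.
  assert (Ht2 : 2 <= e * t).
  { apply (Rmult_le_compat_l e) in Ht; [|lra].
    now replace (e * (2 / e)) with 2 in Ht by (field; lra). }
  assert (Htpos : 8 <= t) by nra.
  assert (HK : (1 - e) * t * (renewal_K (e * t) * L) <= e).
  { unfold renewal_K. replace ((1 - e) * t * (1 / (1 + e * t) ^ 2 * L))
      with ((1 - e) * t * L / (1 + e * t) ^ 2) by (field; nra).
    apply Rle_div_l; [nra|]. nra. }
  assert (Hmain : 1 - 2 * e <= (1 - e) * t * (t / (1 + t) ^ 2)).
  { replace ((1 - e) * t * (t / (1 + t) ^ 2)) with ((1 - e) * t ^ 2 / (1 + t) ^ 2) by (field; lra).
    apply Rle_div_r; [nra|]. nra. }
  assert (HXc : 1 - 3 * e <= (1 - e) * t * X * c).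
  { apply (Rmult_le_compat_l ((1 - e) * t)) in Hbound; nra. }
  set (P := (1 - e) * t * X) in *.
  destruct (Rle_or_lt P 0) as [HP | HP]; [|nra].
  assert (P * c <= 0) by nra. lra.
Qed.

Section Renewal.

Variable F : R -> R.
Hypothesis HF : solves_renewal F.

(* Constant to the left of 0, so that the Leibniz rule for [conv] applies at t = 0. *)
Definition Fext (y : R) : R := F (Rmax 0 y).

Lemma F_0 : F 0 = 0.
Proof.
  destruct HF as [_ [_ Heq]]. rewrite Heq, RInt_point_R by lra.
  unfold renewal_g. field.
Qed.

Lemma Fext_nonneg (y : R) : 0 <= y -> Fext y = F y.
Proof. intros Hy. unfold Fext. now rewrite Rmax_right. Qed.

Lemma continuous_Fext (y : R) : continuous Fext y.
Proof.
  destruct HF as [Hright [Hcont _]].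
  destruct (Rlt_or_le 0 y) as [Hy | Hy].
  - apply (continuous_ext_loc _ F); [|now apply Hcont].
    apply (locally_Rabs y y); [exact Hy|]. intros z Hz. apply Rabs_def2 in Hz.
    symmetry. apply Fext_nonneg. lra.
  - destruct (Rlt_or_le y 0) as [Hy' | Hy'].
    + apply (continuous_ext_loc _ (fun _ => F 0)); [|apply continuous_const].
      apply (locally_Rabs y (- y)); [lra|]. intros z Hz. apply Rabs_def2 in Hz.
      unfold Fext. rewrite Rmax_left by lra. reflexivity.
    + replace y with 0 by lra. intros P [eps HP].
      destruct (Hright 0 (Rle_refl 0) _ (locally_ball (F 0) eps)) as [d Hd].
      exists d. intros z Hz. apply HP. unfold Fext. rewrite (Rmax_left 0 0) by lra.
      destruct (Rle_or_lt z 0) as [Hz0 | Hz0].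
      * rewrite Rmax_left by lra. apply ball_center.
      * rewrite Rmax_right by lra. exact (Hd z Hz Hz0).
Qed.

Lemma renewal_conv (t : R) : 0 <= t -> F t = renewal_g t + conv renewal_k Fext t.
Proof.
  intros Ht. destruct HF as [_ [_ Heq]]. rewrite Heq by exact Ht. f_equal.
  apply conv_ext; [exact Ht|]. intros y Hy. symmetry. apply Fext_nonneg. lra.
Qed.

Definition density (t : R) : R := renewal_g' t + conv renewal_k' Fext t + 2 * Fext t.

Lemma is_derive_conv_k_Fext (t : R) : -1/8 < t ->
  is_derive (conv renewal_k Fext) t (conv renewal_k' Fext t + 2 * Fext t).
Proof.
  intros Ht. replace 2 with (renewal_k 0) by (unfold renewal_k; field).
  apply is_derive_conv; [apply smooth_renewal_k | apply continuous_Fext | exact Ht].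
Qed.

Lemma continuous_density (t : R) : -1/8 < t -> continuous density t.
Proof.
  intros Ht. unfold density. repeat apply continuous_plus_R.
  - apply is_derive_renewal_g. lra.
  - eapply continuous_of_is_derive, is_derive_conv;
      [apply smooth_renewal_k' | apply continuous_Fext | exact Ht].
  - apply continuous_mult_R; [apply continuous_const | apply continuous_Fext].
Qed.

Lemma is_derive_F (t : R) : 0 < t -> is_derive F t (density t).
Proof.
  intros Ht. apply (is_derive_ext_loc (fun u => renewal_g u + conv renewal_k Fext u)).
  - apply (locally_Rabs t t); [exact Ht|]. intros u Hu. apply Rabs_def2 in Hu.
    symmetry. apply renewal_conv. lra.
  - unfold density. rewrite Rplus_assoc.
    apply (is_derive_plus (K := R_AbsRing) (V := R_NormedModule)).
    + apply is_derive_renewal_g. lra.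
    + apply is_derive_conv_k_Fext. lra.
Qed.

Definition integral_density (t : R) : R := RInt density 0 t.

Lemma is_derive_integral_density (t : R) : -1/8 < t ->
  is_derive integral_density t (density t).
Proof.
  intros Ht. apply (is_derive_RInt (V := R_NormedModule) density integral_density 0).
  - apply (locally_Rabs t (t + 1/8)); [lra|]. intros b Hb. apply Rabs_def2 in Hb.
    apply (RInt_correct (V := R_CompleteNormedModule)), ex_RInt_of_continuous.
    intros z Hz. apply continuous_density. revert Hz. unfold Rmin, Rmax. destruct Rle_dec; lra.
  - now apply continuous_density.
Qed.

Lemma integral_density_eq (t : R) : 0 <= t -> integral_density t = F t.
Proof.
  intros Ht. rewrite <- Fext_nonneg by exact Ht.
  apply (eq_of_is_derive _ _ density 0 t Ht).
  - intros x Hx. split; [apply is_derive_integral_density; lra|].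
    apply (is_derive_ext_loc F).
    + apply (locally_Rabs x x); [lra|]. intros u Hu. apply Rabs_def2 in Hu.
      symmetry. apply Fext_nonneg. lra.
    + apply is_derive_F. lra.
  - intros x Hx. split; [|apply continuous_Fext].
    eapply continuous_of_is_derive, is_derive_integral_density. lra.
  - unfold integral_density. rewrite RInt_point_R, Fext_nonneg, F_0 by lra. reflexivity.
Qed.

Lemma conv_by_parts_density (k k' : R -> R) (t : R) : smooth_kernel k k' -> 0 <= t ->
  conv k density t = k 0 * F t + conv k' Fext t.
Proof.
  intros Hk Ht. rewrite (conv_by_parts k k' integral_density density t Hk Ht).
  - rewrite integral_density_eq by exact Ht. f_equal. apply conv_ext; [exact Ht|].
    intros y Hy. rewrite integral_density_eq, Fext_nonneg by lra. reflexivity.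
  - intros y Hy. split; [apply is_derive_integral_density | apply continuous_density]; lra.
  - unfold integral_density. apply RInt_point_R.
Qed.

Lemma density_renewal (t : R) : 0 <= t ->
  density t = renewal_g' t + conv renewal_k density t.
Proof.
  intros Ht. rewrite (conv_by_parts_density _ _ t smooth_renewal_k Ht).
  unfold density. rewrite Fext_nonneg by exact Ht. unfold renewal_k. field.
Qed.

Lemma conv_K_density (t : R) : 0 <= t -> conv renewal_K density t = renewal_g t.
Proof.
  intros Ht. rewrite (conv_by_parts_density _ _ t smooth_renewal_K Ht).
  rewrite (conv_opp_kernel renewal_k renewal_k'), (renewal_conv t) by
    (exact smooth_renewal_k || exact continuous_Fext || exact Ht).
  unfold renewal_K. field.
Qed.

Lemma ex_RInt_conv_density (k k' : R -> R) (t : R) : smooth_kernel k k' -> 0 <= t ->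
  ex_RInt (fun y => k (t - y) * density y) 0 t.
Proof.
  intros Hk Ht. apply ex_RInt_of_continuous. intros z Hz.
  rewrite Rmin_left, Rmax_right in Hz by lra.
  apply continuous_mult_R; [|apply continuous_density; lra].
  apply (continuous_comp (fun y => t - y) k).
  - apply (continuous_of_is_derive _ _ (-1)). auto_derive; [exact I | ring].
  - apply (continuous_kernel k k' Hk). lra.
Qed.

(* [renewal_k_ge_K] and [conv_K_density] bound [conv renewal_k density t] below by
   [2 / (1 + t) * renewal_g t], and [renewal_g' t + 2 / (1 + t) * renewal_g t = 2 / (1 + t)^4]. *)
Lemma density_lower_bound (t : R) : 0 <= t ->
  (forall y, 0 <= y <= t -> 0 <= density y) -> 2 / (1 + t) ^ 4 <= density t.
Proof.
  intros Ht Hpos. rewrite density_renewal by exact Ht.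
  assert (Hcmp : 2 / (1 + t) * conv renewal_K density t <= conv renewal_k density t).
  { unfold conv. rewrite <- RInt_scal_R
      by exact (ex_RInt_conv_density _ _ t smooth_renewal_K Ht).
    apply RInt_le; [exact Ht | | exact (ex_RInt_conv_density _ _ t smooth_renewal_k Ht)|].
    - apply (ex_RInt_scal (V := R_NormedModule) (fun y => renewal_K (t - y) * density y)).
      exact (ex_RInt_conv_density _ _ t smooth_renewal_K Ht).
    - intros y Hy. rewrite <- Rmult_assoc.
      apply Rmult_le_compat_r; [apply Hpos; lra | apply renewal_k_ge_K; lra]. }
  rewrite conv_K_density in Hcmp by exact Ht.
  replace (2 / (1 + t) ^ 4) with (renewal_g' t + 2 / (1 + t) * renewal_g t)
    by (unfold renewal_g, renewal_g'; field; lra).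
  lra.
Qed.

Lemma density_pos (t : R) : 0 <= t -> 0 < density t.
Proof.
  apply pos_by_continuity.
  - intros y Hy. apply continuous_density. lra.
  - unfold density, conv. rewrite RInt_point_R, Fext_nonneg, F_0 by lra.
    unfold renewal_g'. lra.
  - intros y Hy Hpos. eapply Rlt_le_trans; [|exact (density_lower_bound y Hy Hpos)].
    apply Rdiv_lt_0_compat, pow_lt; lra.
Qed.

Lemma F_le (a b : R) : 0 <= a <= b -> F a <= F b.
Proof.
  intros Hab. rewrite <- !integral_density_eq by lra.
  apply (le_of_is_derive_nonneg _ density); [lra | |].
  - intros x Hx. apply is_derive_integral_density. lra.
  - intros x Hx. split.
    + eapply continuous_of_is_derive, is_derive_integral_density. lra.
    + left. apply density_pos. lra.
Qed.

Lemma conv_K_Fext (t : R) : 0 <= t -> conv renewal_K Fext t = t ^ 2 / (1 + t) ^ 2.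
Proof.
  intros Ht.
  apply (eq_of_is_derive (conv renewal_K Fext) (fun t => t ^ 2 / (1 + t) ^ 2) renewal_g 0 t Ht).
  - intros x Hx. split.
    + replace (renewal_g x) with (conv (fun s => - renewal_k s) Fext x + renewal_K 0 * Fext x).
      * apply is_derive_conv; [apply smooth_renewal_K | apply continuous_Fext | lra].
      * rewrite (conv_opp_kernel renewal_k renewal_k'), Fext_nonneg, (renewal_conv x) by
          (exact smooth_renewal_k || exact continuous_Fext || lra).
        unfold renewal_K. field.
    + unfold renewal_g. auto_derive; [solve_nonzero | field; lra].
  - intros x Hx. split.
    + eapply continuous_of_is_derive, is_derive_conv;
        [apply smooth_renewal_K | apply continuous_Fext | lra].
    + apply (continuous_of_is_derive _ _ (renewal_g x)).
      unfold renewal_g. auto_derive; [solve_nonzero | field; lra].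
  - unfold conv. rewrite RInt_point_R. field.
Qed.

Definition tail (y : R) : R := 1 - Fext y.

Lemma continuous_tail (y : R) : continuous tail y.
Proof. apply continuous_minus_R; [apply continuous_const | apply continuous_Fext]. Qed.

Lemma tail_le_compat (a b : R) : 0 <= a <= b -> tail b <= tail a.
Proof.
  intros Hab. unfold tail. rewrite !Fext_nonneg by lra.
  pose proof (F_le a b Hab). lra.
Qed.

Lemma ex_RInt_K_shift (t a b : R) : a <= b <= t -> ex_RInt (fun y => renewal_K (t - y)) a b.
Proof.
  intros Hab. apply ex_RInt_of_continuous. intros z Hz.
  rewrite Rmin_left, Rmax_right in Hz by lra.
  apply (continuous_comp (fun y => t - y) renewal_K).
  - apply (continuous_of_is_derive _ _ (-1)). auto_derive; [exact I | ring].
  - apply (continuous_kernel _ _ smooth_renewal_K). lra.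
Qed.

Lemma ex_RInt_K_tail (t a b : R) : a <= b <= t ->
  ex_RInt (fun y => renewal_K (t - y) * tail y) a b.
Proof.
  intros Hab. apply (ex_RInt_conv_integrand _ _ _ smooth_renewal_K continuous_tail).
  intros z. rewrite Rmin_left, Rmax_right by lra. lra.
Qed.

Lemma conv_K_tail (t : R) : 0 <= t -> conv renewal_K tail t = t / (1 + t) ^ 2.
Proof.
  intros Ht. unfold conv.
  transitivity (RInt (fun y => renewal_K (t - y) - renewal_K (t - y) * Fext y) 0 t).
  { apply RInt_ext. intros y _. unfold tail.
    change (renewal_K (t - y) * (1 - Fext y) = renewal_K (t - y) - renewal_K (t - y) * Fext y).
    ring. }
  rewrite RInt_minus_R.
  - fold (conv renewal_K Fext t). rewrite conv_K_Fext, RInt_renewal_K by lra.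
    field. lra.
  - apply ex_RInt_K_shift. lra.
  - apply (ex_RInt_conv_integrand _ _ _ smooth_renewal_K continuous_Fext).
    intros z. rewrite Rmin_left, Rmax_right by lra. lra.
Qed.

(* Since [tail] is nonincreasing, [conv_K_tail] bounds [tail t] times the kernel mass
   [t / (1 + t)]. *)
Lemma tail_le (t : R) : 0 <= t -> tail t <= 1 / (1 + t).
Proof.
  intros Ht. destruct (Req_dec t 0) as [-> | Ht0].
  { unfold tail. rewrite Fext_nonneg, F_0 by lra. lra. }
  assert (Hcmp : RInt (fun y => tail t * renewal_K (t - y)) 0 t <= conv renewal_K tail t).
  { apply RInt_le; [lra | | apply ex_RInt_K_tail; lra |].
    - apply (ex_RInt_scal (V := R_NormedModule) (fun y => renewal_K (t - y))).
      apply ex_RInt_K_shift. lra.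
    - intros y Hy. rewrite Rmult_comm. apply Rmult_le_compat_l.
      + apply Rlt_le, renewal_K_pos. lra.
      + apply tail_le_compat. lra. }
  rewrite RInt_scal_R, RInt_renewal_K, conv_K_tail in Hcmp
    by (lra || apply ex_RInt_K_shift; lra).
  replace (1 / (1 + t - t) - 1 / (1 + t - 0)) with (t / (1 + t)) in Hcmp by (field; lra).
  apply (Rmult_le_reg_r (t / (1 + t))); [apply Rdiv_lt_0_compat; lra|].
  replace (1 / (1 + t) * (t / (1 + t))) with (t / (1 + t) ^ 2) by (field; lra).
  exact Hcmp.
Qed.

(* Split [conv_K_tail] at [m = (1 - e) t]: on [0, m] use [tail_le] and
   [renewal_K (t - y) <= renewal_K (e t)]; on [m, t] use that [tail] is nonincreasing. *)
Lemma tail_lower_bound (t e : R) : 0 < t -> 0 < e < 1 ->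
  t / (1 + t) ^ 2 <=
    renewal_K (e * t) * ln (1 + (1 - e) * t) + tail ((1 - e) * t) * (1 - 1 / (1 + e * t)).
Proof.
  intros Ht He. set (m := (1 - e) * t).
  assert (Hm : 0 < m < t) by (unfold m; nra).
  rewrite <- conv_K_tail by lra. unfold conv.
  rewrite <- (RInt_Chasles_R _ 0 m t) by (apply ex_RInt_K_tail; lra).
  apply Rplus_le_compat.
  - assert (Hln : RInt (fun y => / (1 + y)) 0 m = ln (1 + m) :> R)
      by (rewrite RInt_inv_shift, Rplus_0_r, ln_1 by lra; ring).
    rewrite <- Hln.
    assert (Hinv : ex_RInt (fun y => / (1 + y)) 0 m).
    { apply ex_RInt_of_continuous. intros z Hz. rewrite Rmin_left, Rmax_right in Hz by lra.
      apply (continuous_of_is_derive _ _ (- / (1 + z) ^ 2)). auto_derive; [lra | field; lra]. }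
    rewrite <- RInt_scal_R by exact Hinv.
    apply RInt_le; [lra | apply ex_RInt_K_tail; lra
                  | apply (ex_RInt_scal (V := R_NormedModule) (fun y => / (1 + y)) _ _ _ Hinv) |].
    intros y Hy.
    assert (HT : tail y <= / (1 + y)).
    { rewrite <- (Rmult_1_l (/ (1 + y))). apply tail_le. lra. }
    apply Rle_trans with (renewal_K (t - y) * / (1 + y)).
    + apply Rmult_le_compat_l; [apply Rlt_le, renewal_K_pos; lra | exact HT].
    + apply Rmult_le_compat_r; [apply Rlt_le, Rinv_0_lt_compat; lra|].
      apply renewal_K_le. unfold m in Hy. nra.
  - assert (Hmass : RInt (fun y => renewal_K (t - y)) m t = 1 - 1 / (1 + e * t) :> R)
      by (rewrite RInt_renewal_K by lra; unfold m; field; nra).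
    rewrite <- Hmass.
    rewrite <- RInt_scal_R by (apply ex_RInt_K_shift; lra).
    apply RInt_le; [lra | apply ex_RInt_K_tail; lra | |].
    + apply (ex_RInt_scal (V := R_NormedModule) (fun y => renewal_K (t - y))).
      apply ex_RInt_K_shift. lra.
    + intros y Hy. rewrite Rmult_comm. apply Rmult_le_compat_r.
      * apply Rlt_le, renewal_K_pos. lra.
      * apply tail_le_compat. lra.
Qed.

(* Apply [tail_lower_bound] at [t = s / (1 - e)]: since [ln (1 + t) = o(t)] the kernel term
   is negligible, leaving [s * tail s >= 1 - 3 e]. *)
Lemma tail_asymptotic : is_lim (fun s => s * tail s) p_infty 1.
Proof.
  apply is_lim_spec. intros eps.
  set (e := Rmin (eps / 4) (1 / 4)).
  assert (He : 0 < e <= 1/4)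
    by (unfold e, Rmin; destruct Rle_dec; pose proof (cond_pos eps); lra).
  assert (Heps : e <= eps / 4) by apply Rmin_l.
  assert (He3 : 0 < e ^ 3 / 2) by (apply Rdiv_lt_0_compat; [apply pow_lt|]; lra).
  pose proof is_lim_div_ln_p as Hln. apply is_lim_spec in Hln.
  destruct (Hln (mkposreal _ He3)) as [N HN]. simpl in HN.
  exists (Rmax (Rmax (2 / e) N) 1). intros s Hs.
  pose proof (Rmax_l (Rmax (2 / e) N) 1). pose proof (Rmax_r (Rmax (2 / e) N) 1).
  pose proof (Rmax_l (2 / e) N). pose proof (Rmax_r (2 / e) N).
  set (t := s / (1 - e)).
  assert (Hst : s = (1 - e) * t) by (unfold t; field; lra).
  assert (Hts : s <= t).
  { unfold t. apply Rle_div_r; nra. }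
  assert (Hupper : s * tail s <= s / (1 + s)).
  { unfold Rdiv. rewrite <- (Rmult_1_l (/ (1 + s))). apply Rmult_le_compat_l; [lra|].
    apply tail_le. lra. }
  assert (Hs1 : s / (1 + s) < 1) by (apply Rlt_div_l; lra).
  assert (HL : 0 <= ln (1 + s) <= e ^ 3 * t).
  { split; [rewrite <- ln_1; apply ln_le; lra|].
    apply Rle_trans with (ln (1 + t)); [apply ln_le; lra|].
    specialize (HN (1 + t) ltac:(lra)). rewrite Rminus_0_r in HN.
    apply Rabs_def2 in HN. destruct HN as [HN _].
    apply (Rmult_lt_compat_r (1 + t)) in HN; [|lra].
    replace (ln (1 + t) / (1 + t) * (1 + t)) with (ln (1 + t)) in HN by (field; lra).
    assert (0 < e ^ 3) by (apply pow_lt; lra). nra. }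
  assert (Hc : 0 <= 1 - 1 / (1 + e * t) <= 1).
  { assert (0 < 1 / (1 + e * t) <= 1) by (split; [apply Rdiv_lt_0_compat | apply Rle_div_l]; nra).
    lra. }
  pose proof (tail_lower_bound t e ltac:(lra) ltac:(lra)) as Hbound. rewrite <- Hst in Hbound.
  pose proof (tail_asymptotic_arith e t _ _ _ He ltac:(lra) HL Hc Hbound) as Hlower.
  rewrite <- Hst in Hlower.
  apply Rabs_def1; lra.
Qed.

Lemma RInt_moment_density (n : nat) (h : R) : 0 <= h ->
  RInt (fun t => t ^ S n * density t) 0 h =
    INR (S n) * RInt (fun t => t ^ n * tail t) 0 h - h ^ S n * tail h.
Proof.
  intros Hh.
  rewrite (RInt_by_parts (fun t => t ^ S n) (fun t => INR (S n) * t ^ n)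
             (fun t => integral_density t - 1) density);
    rewrite ?Rmin_left, ?Rmax_right by lra.
  - rewrite !integral_density_eq, F_0 by lra. replace (0 ^ S n) with 0 by (simpl; ring).
    replace (RInt (fun t => INR (S n) * t ^ n * (integral_density t - 1)) 0 h)
      with (RInt (fun t => - INR (S n) * (t ^ n * tail t)) 0 h).
    + rewrite RInt_scal_R.
      * unfold tail. rewrite (Fext_nonneg h Hh). R_eq. ring.
      * apply ex_RInt_of_continuous. intros z _.
        apply continuous_mult_R; [|apply continuous_tail].
        eapply continuous_of_is_derive, is_derive_pow_id.
    + apply RInt_ext. intros t Ht. rewrite Rmin_left, Rmax_right in Ht by lra.
      unfold tail. rewrite integral_density_eq, Fext_nonneg by lra.
      change (- INR (S n) * (t ^ n * (1 - F t)) = INR (S n) * t ^ n * (F t - 1)). ring.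
  - intros x Hx. split.
    + apply is_derive_pow_id.
    + replace (density x) with (density x - 0) by ring.
      apply is_derive_minus_R;
        [apply is_derive_integral_density; lra | apply (is_derive_const 1 x)].
  - intros x Hx. split; [|apply continuous_density; lra].
    apply continuous_mult_R; [apply continuous_const|].
    eapply continuous_of_is_derive, is_derive_pow_id.
Qed.

End Renewal.

Lemma derivative_eq_density (F F' : R -> R) (t : R) : solves_renewal F ->
  (forall t, 0 < t -> is_derive F t (F' t)) -> 0 < t -> F' t = density F t.
Proof.
  intros HF HF' Ht. rewrite <- (is_derive_unique _ _ _ (HF' t Ht)).
  exact (is_derive_unique _ _ _ (is_derive_F F HF t Ht)).
Qed.

Lemma RInt_moment_derivative (F F' : R -> R) (n : nat) (h : R) : solves_renewal F ->
  (forall t, 0 < t -> is_derive F t (F' t)) -> 0 <= h ->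
  RInt (fun t => t ^ S n * F' t) 0 h =
    INR (S n) * RInt (fun t => t ^ n * tail F t) 0 h - h ^ S n * tail F h.
Proof.
  intros HF HF' Hh. rewrite <- (RInt_moment_density F HF n h Hh).
  apply RInt_ext. intros t Ht. rewrite Rmin_left, Rmax_right in Ht by lra.
  rewrite (derivative_eq_density F F') by (assumption || lra). reflexivity.
Qed.

Lemma is_lim_first_moment (F F' : R -> R) : solves_renewal F ->
  (forall t, 0 < t -> is_derive F t (F' t)) ->
  is_lim (fun h => RInt (fun t => t * F' t) 0 h / ln h) p_infty 1.
Proof.
  intros HF HF'.
  assert (Hratio : is_lim (fun h => RInt (tail F) 1 h / RInt (fun s => / s) 1 h) p_infty 1).
  { apply is_lim_RInt_ratio.
    - intros x Hx. split; [apply continuous_tail, HF | split; [|apply Rinv_0_lt_compat; lra]].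
      apply (continuous_of_is_derive _ _ (- / x ^ 2)). auto_derive; [lra | field; lra].
    - apply (is_lim_ext_loc ln); [|apply is_lim_ln_p].
      exists 1. intros h Hh. rewrite RInt_inv, ln_1 by lra. R_eq. ring.
    - apply (is_lim_ext_loc (fun s => s * tail F s)); [|apply tail_asymptotic, HF].
      exists 0. intros s Hs. field. lra. }
  assert (Htail : is_lim (fun h => h * tail F h / ln h) p_infty 0).
  { replace (Finite 0) with (Rbar_div 1 p_infty) by (simpl; f_equal; ring).
    apply (is_lim_div _ ln p_infty 1 p_infty);
      [apply tail_asymptotic, HF | apply is_lim_ln_p | discriminate | exact I]. }
  pose proof (is_lim_minus' _ _ _ _ _
    (is_lim_plus' _ _ _ _ _ (is_lim_const_div_ln (RInt (tail F) 0 1)) Hratio) Htail) as Hlim.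
  replace (0 + 1 - 0) with 1 in Hlim by ring.
  refine (is_lim_ext_loc _ _ _ _ _ Hlim). exists 1. intros h Hh.
  assert (Hln : 0 < ln h) by (rewrite <- ln_1; apply ln_increasing; lra).
  rewrite RInt_inv, ln_1 by lra.
  rewrite (RInt_ext (fun t => t * F' t) (fun t => t ^ 1 * F' t)) by (intros; R_eq; ring).
  rewrite (RInt_moment_derivative F F' 0 h HF HF') by lra.
  rewrite (RInt_ext (fun t => t ^ 0 * tail F t) (tail F)) by (intros; R_eq; ring).
  rewrite <- (RInt_Chasles_R (tail F) 0 1 h)
    by (apply ex_RInt_of_continuous; intros; apply continuous_tail, HF).
  R_eq. simpl. field. lra.
Qed.

Lemma is_lim_second_moment (F F' : R -> R) : solves_renewal F ->
  (forall t, 0 < t -> is_derive F t (F' t)) ->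
  is_lim (fun h => RInt (fun t => t ^ 2 * F' t) 0 h / h) p_infty 1.
Proof.
  intros HF HF'.
  assert (Hratio : is_lim (fun h => RInt (fun t => t * tail F t) 0 h / RInt (fun _ => 1) 0 h)
                     p_infty 1).
  { apply is_lim_RInt_ratio.
    - intros x Hx. split; [|split; [apply continuous_const | lra]].
      apply continuous_mult_R; [apply continuous_id | apply continuous_tail, HF].
    - apply (is_lim_ext_loc (fun h => h)); [|apply is_lim_id].
      exists 0. intros h Hh. rewrite RInt_const_R. R_eq. ring.
    - apply (is_lim_ext_loc (fun s => s * tail F s)); [|apply tail_asymptotic, HF].
      exists 0. intros s Hs. field. }
  pose proof (is_lim_minus' _ _ _ _ _
    (is_lim_scal_l _ 2 _ _ Hratio) (tail_asymptotic F HF)) as Hlim.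
  simpl in Hlim. replace (2 * 1 - 1) with 1 in Hlim by ring.
  refine (is_lim_ext_loc _ _ _ _ _ Hlim). exists 0. intros h Hh.
  rewrite RInt_const_R, (RInt_moment_derivative F F' 1 h HF HF') by lra.
  rewrite (RInt_ext (fun t => t ^ 1 * tail F t) (fun t => t * tail F t)) by (intros; R_eq; ring).
  R_eq. simpl. field. lra.
Qed.

Theorem lemma2 (F F' : R -> R)
  (HF : solves_renewal F)
  (HF' : forall t, 0 < t -> is_derive F t (F' t)) :
  is_lim (fun h => RInt (fun t => t * F' t) 0 h / ln h) p_infty 1 /\
  is_lim (fun h => RInt (fun t => t ^ 2 * F' t) 0 h / h) p_infty 1.
Proof.
  split; [apply (is_lim_first_moment F) | apply (is_lim_second_moment F)]; assumption.
Qed.
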